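(* Let $A\subseteq\mathbb{R}^d$ be a connected open set and $B\subseteq\mathbb{R}^d$ a bounded open set with $C^1$ boundary such that $\partial B\subseteq A$ and such that the boundary of each connected component of $B$ is connected. Then $A\setminus\overline B$ is connected. *)

From HB Require Import structures.
From mathcomp Require Import all_boot all_order all_algebra.
From mathcomp Require Import all_classical all_reals all_analysis.
Set Implicit Arguments. Unset Strict Implicit. Unset Printing Implicit Defensive.
Import Order.TTheory GRing.Theory Num.Theory.
Import numFieldNormedType.Exports.
Local Open Scope classical_set_scope.
Local Open Scope ring_scope.

Definition boundary {T : topologicalType} (S : set T) : set T :=
  closure S `\` interior S.

Definition C1_fun {R : realType} (d : nat) (f : 'rV[R]_d -> R) : Prop :=
  (forall x, differentiable f x) /\
  (forall v : 'rV[R]_d, continuous (fun x => 'd f x v)).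

Definition orthogonal_mx {R : realType} (d : nat) (M : 'M[R]_d) : Prop :=
  M *m M^T = 1%:M.

(* The open set B has C^1 boundary: near every boundary point p, after an
   orthogonal change of coordinates y = (x - p) M, B is the region strictly
   below the graph of a C^1 function gamma of the remaining d-1 coordinates
   (gamma is represented as a C^1 function on R^d that does not depend on the
   distinguished coordinate j). *)
Definition C1_boundary {R : realType} (d : nat) (B : set 'rV[R]_d) : Prop :=
  forall p, boundary B p ->
  exists (U : set 'rV[R]_d) (M : 'M[R]_d) (j : 'I_d) (gamma : 'rV[R]_d -> R),
    [/\ open U /\ U p, orthogonal_mx M, C1_fun gamma,
        (forall y y' : 'rV[R]_d, (forall i, i != j -> y 0 i = y' 0 i) ->
           gamma y = gamma y') &
        B `&` U = [set x | U x /\ ((x - p) *m M) 0 j < gamma ((x - p) *m M)]].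

From HB Require Import structures.
From mathcomp Require Import all_boot all_order all_algebra.
From mathcomp Require Import all_classical all_reals all_analysis.
From mathcomp Require Import lra.
Import Order.TTheory GRing.Theory Num.Theory.
Import numFieldNormedType.Exports.
Local Open Scope classical_set_scope.
Local Open Scope ring_scope.
Set Implicit Arguments. Unset Strict Implicit. Unset Printing Implicit Defensive.

(* Suppose a relatively clopen set P, nonempty, splits S := A \ cl B.  Near a
   boundary point p the graph chart gives a "collar": an open neighbourhood
   N of p inside A in which N `&` B and the exterior part N \ cl B are both
   connected and p adheres to the exterior part.  The exterior part of a
   collar is therefore either contained in P or disjoint from it; collars of
   nearby boundary points overlap in exterior points, so this alternative is
   locally constant along the boundary, hence constant on the connected
   boundary of each component of B.  The points of P, the boundary points
   whose collars lie in P, and the components of B whose boundary does, form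
   a nonempty relatively clopen subset of the connected set A.  It is all of
   A, which forces P = S. *)

Section Topology.
Context {T : topologicalType}.
Implicit Types B H K N V : set T.

Lemma connected_local_clopen K H : connected K -> H `<=` K -> H !=set0 ->
  (forall x, H x -> exists2 V, open V & V x /\ K `&` V `<=` H) ->
  (forall x, K x -> ~ H x ->
     exists2 V, open V & V x /\ (forall y, K y -> V y -> ~ H y)) ->
  H = K.
Proof.
move=> cK HK H0 Hopen Hcopen; apply: cK => //.
- exists (\bigcup_(V in [set V | open V /\ K `&` V `<=` H]) V).
    by apply: bigcup_open => V [].
  apply/seteqP; split=> [x Hx|x [Kx [V [_ KVH] Vx]]]; last exact: KVH.
  by have [V oV [Vx KVH]] := Hopen x Hx; split; [exact: HK | exists V].
- exists (~` \bigcup_(V in [set V | open V /\ forall y, K y -> V y -> ~ H y]) V).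
    by apply: open_closedC; apply: bigcup_open => V [].
  apply/seteqP; split=> [x Hx|x [Kx nV]].
    by split; [exact: HK | move=> [V [_ VH] Vx]; exact: VH x (HK _ Hx) Vx Hx].
  apply: contrapT => nHx; have [V oV [Vx KVH]] := Hcopen x Kx nHx.
  by apply: nV; exists V.
Qed.

Lemma boundary_open B : open B -> boundary B = closure B `\` B.
Proof. by move=> oB; rewrite /boundary (interior_id B).1. Qed.

Lemma closure_openI B N (p : T) : open N -> N p -> closure B p ->
  closure (N `&` B) p.
Proof.
move=> oN Np cBp W /(filterI (open_nbhs_nbhs (conj oN Np)))/cBp.
by move=> [z [Bz [Nz Wz]]]; exists z.
Qed.

Definition locally_connected_set B :=
  forall x, B x -> exists2 V, open V & [/\ V x, V `<=` B & connected V].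

Lemma open_connected_component B x : locally_connected_set B ->
  open (connected_component B x).
Proof.
move=> lcB; rewrite openE => y Cxy.
have [V oV [Vy VB cV]] := lcB y (connected_component_sub Cxy).
apply: filterS (open_nbhs_nbhs (conj oV Vy)) => z Vz.
rewrite /= (same_connected_component Cxy).
exact: (connected_component_max Vy VB cV).
Qed.

Lemma boundary_connected_component B x : open B -> locally_connected_set B ->
  boundary (connected_component B x) `<=` boundary B.
Proof.
move=> oB lcB z.
rewrite (boundary_open (open_connected_component x lcB)) (boundary_open oB).
move=> [cCz nCz]; split; first exact: closureS (@connected_component_sub _ B x) _ cCz.
move=> Bz; apply: nCz.
have oCz := open_connected_component z lcB.
have [w [Cxw Czw]] :=
  cCz _ (open_nbhs_nbhs (conj oCz (connected_component_refl Bz))).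
rewrite (same_connected_component Cxw) -(same_connected_component Czw).
exact: connected_component_refl.
Qed.

End Topology.

Definition collar {T : topologicalType} (A B N : set T) (p : T) :=
  [/\ open N, N p, N `<=` A, connected (N `\` closure B) &
      connected (N `&` B) /\ closure (N `\` closure B) p].

Section ExteriorConnected.
Context {T : topologicalType}.
Variables A B : set T.
Hypotheses (oA : open A) (cA : connected A) (oB : open B).
Hypothesis cbd : forall x, B x -> connected (boundary (connected_component B x)).
Hypothesis lcB : locally_connected_set B.
Hypothesis collarB : forall p, boundary B p -> exists N, collar A B N p.

Let S := A `\` closure B.

Variables P U C : set T.
Hypotheses (P0 : P !=set0) (oU : open U) (PSU : P = S `&` U).
Hypotheses (cC : closed C) (PSC : P = S `&` C).

Let oS : open S.
Proof. by apply: openI => //; apply: closed_openC; exact: closed_closure. Qed.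

Let oP : open P.
Proof. by rewrite PSU; exact: openI. Qed.

Let PS : P `<=` S. Proof. by rewrite PSU => ? []. Qed.

Let boundaryE x : boundary B x <-> closure B x /\ ~ B x.
Proof. by rewrite boundary_open. Qed.

Lemma connected_sub_or_disjoint K : connected K -> K `<=` S ->
  K `<=` P \/ (forall z, K z -> ~ P z).
Proof.
move=> cK KS; have [[z [Kz Pz]]|nKP] := pselect (K `&` P !=set0); last first.
  by right => z Kz Pz; apply: nKP; exists z.
left; suff <- : K `&` P = K by move=> ? [].
apply: cK; first by exists z.
- by exists U => //; rewrite PSU setIA (setIidl KS).
- by exists C => //; rewrite PSC setIA (setIidl KS).
Qed.

Lemma collar_exterior_sub N p : collar A B N p -> N `\` closure B `<=` S.
Proof. by move=> [_ _ NA _ _] w [Nw nw]; split => //; exact: NA. Qed.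

Lemma collar_exterior_sub_or_disjoint N p : collar A B N p ->
  N `\` closure B `<=` P \/ (forall z, (N `\` closure B) z -> ~ P z).
Proof.
move=> Np; apply: connected_sub_or_disjoint (collar_exterior_sub Np).
by case: Np.
Qed.

Lemma collar_exterior_subE N1 p1 N2 p2 :
  collar A B N1 p1 -> collar A B N2 p2 -> N1 p2 ->
  N1 `\` closure B `<=` P <-> N2 `\` closure B `<=` P.
Proof.
move=> N1p1 N2p2 N1p2.
have [oN1 _ _ _ _] := N1p1; have [_ _ _ _ [_ clN2]] := N2p2.
have [z [N2z N1z]] := clN2 N1 (open_nbhs_nbhs (conj oN1 N1p2)).
have N1z' : (N1 `\` closure B) z by case: N2z.
split=> sub.
- have [//|nP] := collar_exterior_sub_or_disjoint N2p2.
  by case: (nP z N2z); exact: sub.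
- have [//|nP] := collar_exterior_sub_or_disjoint N1p1.
  by case: (nP z N1z'); exact: sub.
Qed.

Definition exterior_inP q := exists N, collar A B N q /\ N `\` closure B `<=` P.

Lemma exterior_inPE N p q : collar A B N p -> N q -> boundary B q ->
  exterior_inP q <-> N `\` closure B `<=` P.
Proof.
move=> Np Nq bq; split=> [[N' [N'q sub]]|sub].
  exact/(collar_exterior_subE Np N'q Nq).
have [N' N'q] := collarB bq; exists N'; split => //.
exact/(collar_exterior_subE Np N'q Nq).
Qed.

Lemma exterior_inP_connected K q q' : connected K -> K `<=` boundary B ->
  K q -> K q' -> exterior_inP q -> exterior_inP q'.
Proof.
move=> cK KB Kq Kq' Lq.
suff KL : K `&` exterior_inP = K by rewrite -KL in Kq'; case: Kq'.
apply: connected_local_clopen => //; first by exists q.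
- move=> x [Kx Lx]; have [N Nx] := collarB (KB _ Kx); have [oN Nxx _ _ _] := Nx.
  exists N => //; split => // y [Ky Ny]; split => //.
  by apply/(exterior_inPE Nx Ny (KB _ Ky)); apply/(exterior_inPE Nx Nxx (KB _ Kx)).
- move=> x Kx nLx; have [N Nx] := collarB (KB _ Kx); have [oN Nxx _ _ _] := Nx.
  exists N => //; split => // y Ky Ny [_ Ly]; apply: nLx; split => //.
  by apply/(exterior_inPE Nx Nxx (KB _ Kx)); apply/(exterior_inPE Nx Ny (KB _ Ky)).
Qed.

Lemma collar_boundary_component N x y : collar A B N x -> boundary B x ->
  N y -> B y -> boundary (connected_component B y) x.
Proof.
move=> [oN Nx _ _ [cNB _]] /boundaryE[cBx nBx] Ny By.
rewrite (boundary_open (open_connected_component y lcB)); split; last first.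
  by move/connected_component_sub.
have := closure_openI oN Nx cBx; apply: closureS.
by apply: connected_component_max => // ? [].
Qed.

Definition attached x := A x /\ [\/ P x, boundary B x /\ exterior_inP x |
  B x /\ exists2 q, boundary (connected_component B x) q & exterior_inP q].

Lemma attached_nbhd x : attached x ->
  exists2 V, open V & V x /\ A `&` V `<=` attached.
Proof.
move=> [Ax [Px|[bx [N [Nx sub]]]|[Bx [q bq Lq]]]].
- by exists P => //; split => // y [Ay Py]; split => //; apply: Or31.
- have [oN Nxx _ _ _] := Nx; exists N => //; split => // y [Ay Ny]; split => //.
  have [Byc|nByc] := pselect (closure B y); last by apply: Or31; apply: sub.
  have [By|nBy] := pselect (B y).
    apply: Or33; split => //; exists x; last by exists N.
    exact: collar_boundary_component Nx bx Ny By.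
  have by' : boundary B y by apply/boundaryE.
  by apply: Or32; split => //; apply/(exterior_inPE Nx Ny by').
- exists (connected_component B x); first exact: open_connected_component.
  split; first exact: connected_component_refl.
  move=> y [Ay Cy]; split => //; apply: Or33.
  split; first exact: connected_component_sub Cy.
  by exists q => //; rewrite -(same_connected_component Cy).
Qed.

Lemma not_attached_nbhd x : A x -> ~ attached x ->
  exists2 V, open V & V x /\ (forall y, A y -> V y -> ~ attached y).
Proof.
move=> Ax nHx; have [cBx|ncBx] := pselect (closure B x); last first.
  exists (S `&` ~` C); first by apply: openI => //; exact: closed_openC.
  split.
    by split=> [//|Cx]; apply: nHx; split => //; apply: Or31; rewrite PSC.
  move=> y _ [[_ ncBy] nCy] [_ [Py|[/boundaryE[cBy _] _]|[By _]]] //.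
  - by apply: nCy; move: Py; rewrite PSC => -[].
  - by apply: ncBy; exact: subset_closure.
have [Bx|nBx] := pselect (B x).
  exists (connected_component B x); first exact: open_connected_component.
  split=> [|y _ Cy [_ [Py|[/boundaryE[_ nBy] _]|[_ [q bq Lq]]]]].
  - exact: connected_component_refl.
  - have [_ ncBy] := PS Py.
    exact/ncBy/subset_closure/(connected_component_sub Cy).
  - exact/nBy/(connected_component_sub Cy).
  - apply: nHx; split => //; apply: Or33; split => //.
    by exists q; rewrite ?(same_connected_component Cy).
have bx : boundary B x by apply/boundaryE.
have nLx : ~ exterior_inP x by move=> Lx; apply: nHx; split => //; apply: Or32.
have [N Nx] := collarB bx; have [oN Nxx _ _ _] := Nx.
exists N => //; split => // y Ay Ny [_ [Py|[by' Ly]|[By [q bq Lq]]]]; apply: nLx.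
- have [sub|nP] := collar_exterior_sub_or_disjoint Nx; first by exists N.
  by case: (nP y) => //; split => //; have [] := PS Py.
- by exists N; split => //; apply/(exterior_inPE Nx Ny by').
- apply: (exterior_inP_connected (cbd By) _ bq) => //.
    exact: boundary_connected_component.
  exact: collar_boundary_component Nx bx Ny By.
Qed.

Lemma attached_eq : attached = A.
Proof.
apply: connected_local_clopen => //.
- by move=> ? [].
- by have [z Pz] := P0; exists z; split; [exact: (PS Pz).1 | apply: Or31].
- exact: attached_nbhd.
- exact: not_attached_nbhd.
Qed.

Lemma clopen_exterior_eq : P = S.
Proof.
apply/seteqP; split => // x [Ax ncBx].
have : attached x by rewrite attached_eq.
move=> [_ [//|[/boundaryE[cBx _] _]|[Bx _]]]; exfalso; apply: ncBx => //.
exact: subset_closure.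
Qed.

End ExteriorConnected.

Theorem connected_exterior {T : topologicalType} (A B : set T) :
  open A -> connected A -> open B ->
  (forall x, B x -> connected (boundary (connected_component B x))) ->
  locally_connected_set B ->
  (forall p, boundary B p -> exists N, collar A B N p) ->
  connected (A `\` closure B).
Proof.
move=> oA cA oB cbd lcB collarB P P0 [U oU PSU] [C cC PSC].
exact: (clopen_exterior_eq oA cA oB cbd lcB collarB P0 oU PSU cC PSC).
Qed.

Lemma lt_convex_comb (R : realFieldType) (a b1 b2 t : R) :
  a < b1 -> a < b2 -> 0 <= t <= 1 -> a < b1 + t * (b2 - b1).
Proof.
move=> h1 h2 /andP[t0 t1]; have [b12|b21] := leP b1 b2.
  have : 0 <= t * (b2 - b1) by rewrite mulr_ge0 // subr_ge0.
  lra.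
have : 0 <= (1 - t) * (b1 - b2) by rewrite mulr_ge0 // subr_ge0 // ltW.
lra.
Qed.

Lemma gt_convex_comb (R : realFieldType) (a b1 b2 t : R) :
  b1 < a -> b2 < a -> 0 <= t <= 1 -> b1 + t * (b2 - b1) < a.
Proof.
move=> h1 h2 t01; have : - a < - b1 + t * (- b2 - - b1).
  by apply: lt_convex_comb; rewrite // ltrN2.
lra.
Qed.

Lemma norm_convex_comb (R : realFieldType) (s b1 b2 t : R) :
  `|b1| < s -> `|b2| < s -> 0 <= t <= 1 -> `|b1 + t * (b2 - b1)| < s.
Proof.
rewrite !ltr_norml => /andP[h1 h2] /andP[h3 h4] t01.
by rewrite lt_convex_comb ?gt_convex_comb.
Qed.

Section Segment.
Variables (R : realType) (V : normedModType R).

Definition segment (a b : V) : set V := [set a + t *: (b - a) | t in `[0, 1]].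

Lemma connected_segment (a b : V) : connected (segment a b).
Proof.
apply: connected_continuous_connected; first exact: segment_connected.
apply: continuous_subspaceT => t.
apply: (continuousD (@cst_continuous _ _ a t)).
exact: (continuousZr_tmp (@cvg_id _ (nbhs t))).
Qed.

Lemma segment_left (a b : V) : segment a b a.
Proof. by exists 0; [rewrite /= in_itv /= lexx ler01 | rewrite scale0r addr0]. Qed.

Lemma segment_right (a b : V) : segment a b b.
Proof. by exists 1; [rewrite /= in_itv /= lexx ler01 | rewrite scale1r addrC subrK]. Qed.

Lemma connected_broken_segments (K : set V) (c : V) (mid : V -> V) :
  (forall y, K y -> segment y (mid y) `<=` K) ->
  (forall y, K y -> segment (mid y) c `<=` K) -> connected K.
Proof.
move=> Kleft Kright.
have -> : K = \bigcup_(y in K) (segment y (mid y) `|` segment (mid y) c).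
  apply/seteqP; split=> [y Ky|y [z Kz [/Kleft|/Kright]]]; try exact.
  by exists y => //; left; exact: segment_left.
apply: bigcup_connected; first by exists c => y Ky; right; exact: segment_right.
move=> y Ky; apply: connectedU; try exact: connected_segment.
by exists (mid y); split; [exact: segment_right | exact: segment_left].
Qed.

Lemma connected_ball (c : V) e : connected (ball c e).
Proof.
apply: (@connected_broken_segments _ c id) => y yB z [t t01 <-].
  by rewrite /= subrr scaler0 addr0.
move: yB t01; rewrite -ball_normE /= in_itv /= => yB /andP[t0 t1].
have -> : c - (y + t *: (c - y)) = (1 - t) *: (c - y).
  by rewrite scalerBl scale1r opprD addrA.
rewrite normrZ ger0_norm ?subr_ge0 //; apply: le_lt_trans yB.
by rewrite ler_piMl // lerBlDr lerDl.
Qed.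

End Segment.

Lemma locally_connected_open (R : realType) (V : normedModType R) (B : set V) :
  open B -> locally_connected_set B.
Proof.
move=> oB y By; have /nbhs_ballP [e /= e0 eB] := open_nbhs_nbhs (conj oB By).
exists (ball y e); first exact: ball_open.
by split; [exact: ballxx | | exact: connected_ball].
Qed.

Section MatrixContinuity.
Variable R : realType.

Lemma continuous_mx (T : topologicalType) m n (f : T -> 'M[R]_(m, n)) :
  (forall i j, continuous (fun x => f x i j)) -> continuous f.
Proof.
move=> fc x A /nbhs_ballP [e e0 eA].
have : \forall y \near x, forall ij : 'I_m * 'I_n,
    ball (f x ij.1 ij.2) e (f y ij.1 ij.2).
  by apply: filter_forall => ij; exact: (fc ij.1 ij.2 x _ (nbhsx_ballx _ _ e0)).
by apply: filterS => y fy; apply: eA; split => // i j; exact: (fy (i, j)).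
Qed.

Lemma continuous_mulmxr m n k (M : 'M[R]_(n, k)) :
  continuous (fun x : 'M[R]_(m, n) => x *m M).
Proof.
apply: continuous_mx => i l; under eq_fun do rewrite mxE.
apply: continuous_big => [|j _ x]; first exact: add_continuous.
exact: (continuousM (@coord_continuous _ _ _ i j x) (@cst_continuous _ _ (M j l) x)).
Qed.

Lemma rV_ball0P d (y : 'rV[R]_d) e : 0 < e ->
  ball 0 e y <-> forall i, `|y 0 i| < e.
Proof.
move=> e0; split=> [[_ ye] i|ye].
  by have := ye 0 i; rewrite -ball_normE /= mxE sub0r normrN.
by split => // a i; rewrite (ord1 a) -ball_normE /= mxE sub0r normrN.
Qed.

End MatrixContinuity.

Lemma nbhs_line (R : realType) (V : normedModType R) (y v : V) (W : set V) :
  nbhs y W -> exists2 t : R, 0 < t & forall tau, `|tau| < t -> W (y + tau *: v).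
Proof.
move=> yW; have cline : {for 0, continuous (fun tau : R => y + tau *: v)}.
  apply: (continuousD (@cst_continuous _ _ y 0)).
  exact: (continuousZr_tmp (@cvg_id _ (nbhs (0 : R)))).
have /nbhs_ballP [t /= t0 tW] : nbhs (0 : R) ((fun tau => y + tau *: v) @^-1` W).
  by apply: cline; rewrite /= scale0r addr0.
by exists t => // tau ?; apply: tW; rewrite -ball_normE /= sub0r normrN.
Qed.

Section GraphBox.
Variables (R : realType) (d : nat) (j : 'I_d).
Local Notation V := 'rV[R]_d.
Local Notation ej := (delta_mx 0 j : V).

Definition independent_of (g : V -> R) :=
  forall y y' : V, (forall i, i != j -> y 0 i = y' 0 i) -> g y = g y'.

Definition box (rad : 'I_d -> R) : set V := [set y | forall i, `|y 0 i| < rad i].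

Lemma shift_entry (y : V) c i : (y + c *: ej) 0 i = y 0 i + c * (i == j)%:R.
Proof. by rewrite !mxE eqxx. Qed.

Lemma independent_of_shift g y c : independent_of g -> g (y + c *: ej) = g y.
Proof. by move=> gj; apply: gj => i ij; rewrite shift_entry (negbTE ij) mulr0 addr0. Qed.

Lemma open_box rad : open (box rad).
Proof.
rewrite openE => y By; rewrite /interior.
apply: (@filter_forall V 'I_d (fun i z => `|z 0 i| < rad i) _ (nbhs_filter y)).
move=> i.
apply: open_nbhs_nbhs; split; last exact: By.
change (open ((fun z : V => `|z 0 i|) @^-1` [set x | x < rad i])).
apply: (continuousP _).1; last exact: open_lt.
by move=> z; apply: continuous_comp; [exact: coord_continuous | exact: norm_continuous].
Qed.

Lemma segment_entry (a b z : V) : segment a b z ->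
  exists2 t, 0 <= t <= 1 & forall i, z 0 i = a 0 i + t * (b 0 i - a 0 i).
Proof.
move=> [t t01 <-]; exists t; first by move: t01; rewrite /= in_itv.
by move=> i; rewrite !mxE.
Qed.

Lemma box_segment rad a b : box rad a -> box rad b -> segment a b `<=` box rad.
Proof.
by move=> Ba Bb z /segment_entry [t t01 ze] i; rewrite ze; exact: norm_convex_comb.
Qed.

Lemma connected_box_region rad (g : V -> R) (Pr : R -> R -> Prop) t0 :
  independent_of g -> (forall i, 0 < rad i) -> `|t0| < rad j ->
  (forall y, box rad y -> Pr (g y) t0) ->
  (forall a b1 b2 t, Pr a b1 -> Pr a b2 -> 0 <= t <= 1 ->
     Pr a (b1 + t * (b2 - b1))) ->
  connected [set y | box rad y /\ Pr (g y) (y 0 j)].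
Proof.
move=> gj rad_gt0 t0j Pr_t0 Pr_convex.
pose mid (y : V) : V := y + (t0 - y 0 j) *: ej.
have mid_j y : mid y 0 j = t0 by rewrite shift_entry eqxx mulr1 addrC subrK.
have box_mid y : box rad y -> box rad (mid y).
  move=> By i; rewrite shift_entry; have [->|ij] := eqVneq i j.
    by rewrite mulr1 addrC subrK.
  by rewrite mulr0 addr0; exact: By.
have box_c : box rad (t0 *: ej).
  move=> i; rewrite !mxE; have [->|ij] := eqVneq i j; first by rewrite eqxx mulr1.
  by rewrite mulr0 normr0.
have c_j : (t0 *: ej) 0 j = t0 by rewrite !mxE !eqxx mulr1.
(* Go vertically to height t0, then straight to t0 e_j: both legs stay in the
   region, the first because g is constant on vertical lines. *)
apply: (@connected_broken_segments _ _ _ (t0 *: ej) mid).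
- move=> y [By Py] z yz; split; first exact: (box_segment By (box_mid y By) yz).
  have [t t01 ze] := segment_entry yz.
  have -> : g z = g y.
    apply: gj => i ij; rewrite ze shift_entry (negbTE ij).
    by rewrite mulr0 addr0 subrr mulr0 addr0.
  by rewrite ze mid_j; exact: Pr_convex Py (Pr_t0 y By) t01.
- move=> y [By _] z yz; have Bz := box_segment (box_mid y By) box_c yz.
  split => //; have [t t01 ze] := segment_entry yz.
  by rewrite ze mid_j c_j subrr mulr0 addr0; exact: Pr_t0.
Qed.

Lemma connected_box_above rad g : independent_of g -> (forall i, 0 < rad i) ->
  (forall y, box rad y -> `|g y| < rad j / 2) ->
  connected [set y | box rad y /\ g y < y 0 j].
Proof.
move=> gj rad_gt0 gbox; have := rad_gt0 j => radj.
apply: (@connected_box_region _ _ (fun a b => a < b) (rad j * 3 / 4)) => //.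
- by rewrite gtr0_norm; lra.
- by move=> y /gbox; rewrite ltr_norml => /andP[_ ?]; lra.
- by move=> a b1 b2 t; exact: lt_convex_comb.
Qed.

Lemma connected_box_below rad g : independent_of g -> (forall i, 0 < rad i) ->
  (forall y, box rad y -> `|g y| < rad j / 2) ->
  connected [set y | box rad y /\ y 0 j < g y].
Proof.
move=> gj rad_gt0 gbox; have := rad_gt0 j => radj.
apply: (@connected_box_region _ _ (fun a b => b < a) (- (rad j * 3 / 4))) => //.
- by rewrite normrN gtr0_norm; lra.
- by move=> y /gbox; rewrite ltr_norml => /andP[? _]; lra.
- by move=> a b1 b2 t; exact: gt_convex_comb.
Qed.

Lemma exists_flat_box (g : V -> R) (W : set V) :
  independent_of g -> {for 0, continuous g} -> g 0 = 0 -> nbhs (0 : V) W ->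
  exists rad, [/\ forall i, 0 < rad i, box rad `<=` W &
    forall y, box rad y -> `|g y| < rad j / 2].
Proof.
move=> gj g0c g0 /nbhs_ballP [e /= e0 eW].
have /nbhs_ballP [r0 r00 r0g] : nbhs (0 : V) (g @^-1` ball 0 (e / 4)).
  by apply: g0c; rewrite g0; apply: nbhsx_ballx; lra.
pose s := e / 2; pose r := Num.min r0 s.
have r_gt0 : 0 < r by rewrite /r lt_min r00 /s; lra.
have r_le : r <= r0 /\ r <= s by rewrite /r !ge_min !lexx ?orbT.
pose rad i := if i == j then s else r.
have rad_le i : rad i <= s by rewrite /rad; case: ifP => _ //; case: r_le.
exists rad; split.
- by move=> i; rewrite /rad; case: ifP => _ //; rewrite /s; lra.
- move=> y By; apply/eW/rV_ball0P => // i.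
  by apply: (lt_le_trans (By i)); apply: (le_trans (rad_le i)); rewrite /s; lra.
- move=> y By; rewrite /rad eqxx.
  have <- : g (y + (- y 0 j) *: ej) = g y by exact: independent_of_shift.
  have : ball (0 : V) r0 (y + (- y 0 j) *: ej).
    apply/rV_ball0P => // i; rewrite shift_entry.
    have [->|ij] := eqVneq i j; first by rewrite mulr1 subrr normr0.
    rewrite mulr0 addr0; apply: (lt_le_trans (By i)).
    by rewrite /rad (negbTE ij); case: r_le.
  by move/r0g; rewrite -ball_normE /= sub0r normrN /s; lra.
Qed.

Lemma open_above_graph g : continuous g -> open [set y : V | g y < y 0 j].
Proof.
move=> gC; have -> : [set y : V | g y < y 0 j] =
    (fun y : V => y 0 j - g y) @^-1` [set z | 0 < z].
  by apply/seteqP; split => y /=; rewrite subr_gt0.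
apply: (continuousP _).1; last exact: open_gt.
by move=> y; apply: continuousB; [exact: coord_continuous | exact: gC].
Qed.

End GraphBox.

Section GraphChart.
Variables (R : realType) (d : nat).
Local Notation V := 'rV[R]_d.
Variables (A B U : set V) (p : V) (M : 'M[R]_d) (j : 'I_d) (g : V -> R).
Hypotheses (oA : open A) (oB : open B) (Ap : A p) (bp : boundary B p).
Hypotheses (oU : open U) (Up : U p) (orthM : orthogonal_mx M).
Hypotheses (gC : continuous g) (gj : independent_of j g).
Hypothesis BU : B `&` U = [set x | U x /\ ((x - p) *m M) 0 j < g ((x - p) *m M)].

Let phi (x : V) : V := (x - p) *m M.
Let psi (y : V) : V := y *m M^T + p.
Local Notation ej := (delta_mx 0 j : V).

Let phiK : cancel phi psi.
Proof. by move=> x; rewrite /psi /phi -mulmxA orthM mulmx1 subrK. Qed.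

Let psiK : cancel psi phi.
Proof. by move=> y; rewrite /phi /psi addrK -mulmxA (mulmx1C orthM) mulmx1. Qed.

Let phi_p : phi p = 0.
Proof. by rewrite /phi subrr mul0mx. Qed.

Let phi_continuous : continuous phi.
Proof.
move=> x; change {for x, continuous ((fun y : V => y *m M) \o (fun z => z - p))}.
apply: continuous_comp; last exact: continuous_mulmxr.
exact: (continuousB (@cvg_id _ (nbhs x)) (@cst_continuous _ _ p x)).
Qed.

Let psi_continuous : continuous psi.
Proof.
move=> y; apply: (@continuousD _ _ _ (fun z : V => z *m M^T) (fun=> p)).
  exact: continuous_mulmxr.
exact: cst_continuous.
Qed.

Let B_chart x : U x -> B x <-> phi x 0 j < g (phi x).
Proof.
move=> Ux; have : (B `&` U) x <-> phi x 0 j < g (phi x).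
  by rewrite BU; split=> [[]|] //.
by move=> <-; split=> [|[]].
Qed.

Let notin_closure_chart x : U x -> g (phi x) < phi x 0 j -> ~ closure B x.
Proof.
move=> Ux gx cBx.
have oW : open (U `&` phi @^-1` [set y | g y < y 0 j]).
  by apply: openI => //; apply: (continuousP _).1 => //; exact: open_above_graph.
have [z [Bz [Uz gz]]] := cBx _ (open_nbhs_nbhs (conj oW (conj Ux gx))).
by have := (B_chart Uz).1 Bz; rewrite /= in gz; lra.
Qed.

Let closure_chart x : U x -> closure B x <-> phi x 0 j <= g (phi x).
Proof.
move=> Ux; split=> [cBx|].
  by rewrite leNgt; apply/negP => gx; exact: notin_closure_chart Ux gx cBx.
rewrite le_eqVlt => /orP[/eqP xg|xg]; last exact/subset_closure/(B_chart Ux).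
move=> W /(filterI (open_nbhs_nbhs (conj oU Ux))) UWx.
have UWphi : nbhs (phi x) (psi @^-1` (U `&` W)).
  by apply: psi_continuous; rewrite phiK.
have [t /= t0 tUW] := nbhs_line ej UWphi.
have [Uz Wz] : (U `&` W) (psi (phi x + (- (t / 2)) *: ej)).
  by apply: tUW; rewrite normrN ger0_norm; lra.
exists (psi (phi x + (- (t / 2)) *: ej)); split => //; apply/(B_chart Uz).
by rewrite psiK independent_of_shift // shift_entry eqxx mulr1 xg; lra.
Qed.

Let g0 : g 0 = 0.
Proof.
move: bp; rewrite boundary_open // => -[/(closure_chart Up) + nBp].
rewrite phi_p mxE => g0_ge; apply/eqP; rewrite eq_le g0_ge andbT leNgt.
by apply/negP => g0_gt; apply/nBp/(B_chart Up); rewrite phi_p mxE.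
Qed.

Let chart_preimage (Q : set V) : phi @^-1` Q = psi @` Q.
Proof.
apply/seteqP; split=> [x Qx|_ [y Qy <-]]; last by rewrite /= psiK.
by exists (phi x); rewrite ?phiK.
Qed.

Let closure_exterior N : open N -> N p -> N `<=` U ->
  closure (N `\` closure B) p.
Proof.
move=> oN Np NU W /(filterI (open_nbhs_nbhs (conj oN Np))) NWp.
have NW0 : nbhs (0 : V) (psi @^-1` (N `&` W)).
  by apply: psi_continuous; rewrite -phi_p phiK.
have [t /= t0 tNW] := nbhs_line ej NW0.
have [Nz Wz] : (N `&` W) (psi (0 + (t / 2) *: ej)).
  by apply: tNW; rewrite ger0_norm; lra.
exists (psi (0 + (t / 2) *: ej)); split => //; split => //.
rewrite (closure_chart (NU _ Nz)) psiK independent_of_shift // g0.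
by rewrite shift_entry mxE eqxx mulr1 add0r => ?; lra.
Qed.

Lemma collar_graph_chart : exists N, collar A B N p.
Proof.
have UAp : nbhs (0 : V) (psi @^-1` (U `&` A)).
  apply: psi_continuous; rewrite -phi_p phiK.
  by apply: open_nbhs_nbhs; split; [exact: openI|].
have [rad [rad_gt0 boxUA gbox]] := exists_flat_box gj (@gC 0) g0 UAp.
pose N := phi @^-1` box rad.
have oN : open N by apply: (continuousP _).1 => //; exact: open_box.
have Np : N p by rewrite /N /= phi_p => i; rewrite mxE normr0.
have NUA x : N x -> U x /\ A x by move=> /boxUA; rewrite /= phiK.
have exteriorE : N `\` closure B = phi @^-1` [set y | box rad y /\ g y < y 0 j].
  apply/seteqP; split=> x [Nx]; have [Ux _] := NUA x Nx.
    by rewrite (closure_chart Ux) => /negP; rewrite -ltNge.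
  by move=> gx; split=> //; rewrite (closure_chart Ux) leNgt gx.
have interiorE : N `&` B = phi @^-1` [set y | box rad y /\ y 0 j < g y].
  apply/seteqP; split=> x [Nx]; have [Ux _] := NUA x Nx.
    by rewrite (B_chart Ux).
  by move=> xg; split=> //; rewrite (B_chart Ux).
exists N; split => //.
- by move=> x /NUA[].
- rewrite exteriorE chart_preimage.
  apply: connected_continuous_connected; last exact: continuous_subspaceT.
  exact: connected_box_above.
- split.
    rewrite interiorE chart_preimage.
    apply: connected_continuous_connected; last exact: continuous_subspaceT.
    exact: connected_box_below.
  by apply: closure_exterior => // x /NUA[].
Qed.

End GraphChart.

Unset Implicit Arguments. Set Strict Implicit.
Theorem lemma6 (R : realType) (d : nat) (A B : set 'rV[R]_d) :
  open A -> connected A ->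
  open B -> bounded_set B -> C1_boundary B ->
  boundary B `<=` A ->
  (forall x, B x -> connected (boundary (connected_component B x))) ->
  connected (A `\` closure B).
Proof.
move=> oA cA oB _ C1B bdA cbd.
apply: connected_exterior => //; first exact: locally_connected_open.
move=> p bp; have [U [M [j [g [[oU Up] orthM [gD _] gj BU]]]]] := C1B p bp.
have gC : continuous g by move=> x; exact: differentiable_continuous.
exact: collar_graph_chart oA oB (bdA _ bp) bp oU Up orthM gC gj BU.
Qed.
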